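(* Let $d \ge 1$ and $\rho \ge 0$ be integers. For every collection of $\rho$ pairwise incomparable points $r^{(1)}, \dots, r^{(\rho)} \in (0,1)^d$ whose $d\rho$ coordinates are all distinct, the number $\gamma$ of generators of their record-setting region satisfies $\gamma \ge (d-1)\rho + 1$. Moreover, for every $d\ge 1$ and $\rho \ge 0$ for which such a collection of $\rho$ points exists, there is such a collection with $\gamma = (d-1)\rho + 1$; thus $(d-1)\rho+1$ is the smallest possible number of generators.
   Context: For $x,y \in \mathbb{R}^d$, $x \prec y$ means $x_j < y_j$ for all $j \in [d]$, and $x \le y$ means $x_j \le y_j$ for all $j$; points are incomparable if neither is $\le$ the other. The record-setting region of points $r^{(1)},\dots,r^{(\rho)}$ is $S := \{x \in [0,1)^d : x \not\prec r^{(i)} \text{ for all } i \in [\rho]\}$ (so for $\rho=0$, $S=[0,1)^d$), and its generators are the minimal elements of $S$ with respect to $\le$. *)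

From HB Require Import structures.
From mathcomp Require Import all_boot all_order all_algebra.
Set Implicit Arguments. Unset Strict Implicit. Unset Printing Implicit Defensive.
Import Order.TTheory GRing.Theory Num.Theory.
Local Open Scope ring_scope.

Section RecordRegion.
Variables (R : realFieldType) (d rho : nat).
Notation pt := {ffun 'I_d -> R}.

Definition vlt (x y : pt) : bool := [forall j, x j < y j].
Definition vle (x y : pt) : bool := [forall j, x j <= y j].

Definition in_region (r : 'I_rho -> pt) (x : pt) : bool :=
  [forall j, (0 <= x j) && (x j < 1)] && [forall i, ~~ vlt x (r i)].

Definition is_generator (r : 'I_rho -> pt) (x : pt) : Prop :=
  in_region r x /\ (forall y, in_region r y -> vle y x -> y = x).

Definition admissible (r : 'I_rho -> pt) : Prop :=
  (forall i j, 0 < r i j /\ r i j < 1) /\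
  (forall i i', i != i' -> ~~ vle (r i) (r i')) /\
  injective (fun p : 'I_rho * 'I_d => r p.1 p.2).

Definition num_generators (r : 'I_rho -> pt) (g : nat) : Prop :=
  exists s : seq pt, [/\ uniq s, (forall x, x \in s <-> is_generator r x)
                       & size s = g].
End RecordRegion.

From HB Require Import structures.
From mathcomp Require Import all_boot all_order all_algebra zify.
Import Order.TTheory GRing.Theory Num.Theory.
Set Implicit Arguments. Unset Strict Implicit. Unset Printing Implicit Defensive.
Local Open Scope ring_scope.

(* Lower bound.  We study the region [region r T] of an arbitrary subfamily
   [T] of the points.  Rounding every coordinate down to the grid formed by
   [0] and the coordinates of the points of [T] keeps a point in the region;
   hence generators are grid points, which yields the finite list
   [gens r T] of all generators and shows that every point of the region
   lies above a generator.  The points are then added one at a time, always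
   the point [p] of [T] with the smallest first coordinate: the generators
   of [T :\ p] lift injectively to generators of [T] (those dominated by
   [r p] get their first coordinate raised to that of [r p]), and for each
   other coordinate [j] a further generator meets [r p] exactly at [j].  So
   each point contributes at least [d - 1] generators.

   Optimality.  The family [stair], with decreasing first coordinates and
   increasing other coordinates, has as generators [top] and the corners
   [corner i j] ([j] not the first coordinate), (d - 1) rho + 1 in all.  It
   is admissible whenever an admissible family exists at all, since in
   dimension 1 admissible families have at most one point. *)

Section CoordinateOrder.
Variables (R : realFieldType) (d : nat).
Implicit Types (x y z : {ffun 'I_d -> R}) (j k : 'I_d) (v : R).

Lemma vleP x y : reflect (forall j, x j <= y j) (vle x y).
Proof. exact: forallP. Qed.

Lemma vltP x y : reflect (forall j, x j < y j) (vlt x y).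
Proof. exact: forallP. Qed.

Lemma vle_trans y x z : vle x y -> vle y z -> vle x z.
Proof. by move=> /vleP xy /vleP yz; apply/vleP => j; exact: le_trans (xy j) (yz j). Qed.

Lemma vle_anti x y : vle x y -> vle y x -> x = y.
Proof. by move=> /vleP xy /vleP yx; apply/ffunP => j; apply/le_anti; rewrite xy yx. Qed.

Lemma vle_vlt_trans y x z : vle x y -> vlt y z -> vlt x z.
Proof. by move=> /vleP xy /vltP yz; apply/vltP => j; exact: le_lt_trans (xy j) (yz j). Qed.

(* A point below [y] whose coordinate sum is at least that of [y] is [y]
   itself: the argument that makes sum-minimal points minimal. *)
Lemma vle_sum_eq x y : vle x y -> \sum_j y j <= \sum_j x j -> x = y.
Proof.
move=> /vleP xy sum_le; apply/ffunP => j; apply/eqP; rewrite eq_sym -subr_eq0.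
have gap_ge0 k : 0 <= y k - x k by rewrite subr_ge0.
have gap0 : \sum_k (y k - x k) = 0.
  by apply/le_anti; rewrite sumr_ge0 ?andbT // sumrB subr_le0.
by apply/eqP; apply: (psumr_eq0P (fun k _ => gap_ge0 k) gap0).
Qed.

Definition upd x j v : {ffun 'I_d -> R} := [ffun k => if k == j then v else x k].

Lemma upd_same x j v : upd x j v j = v.
Proof. by rewrite ffunE eqxx. Qed.

Lemma upd_other x j v k : k != j -> upd x j v k = x k.
Proof. by rewrite ffunE => /negbTE ->. Qed.

Lemma upd_upd x j v w : upd (upd x j v) j w = upd x j w.
Proof. by apply/ffunP => k; rewrite !ffunE; case: eqP. Qed.

Lemma updK x j : upd x j (x j) = x.
Proof. by apply/ffunP => k; rewrite ffunE; case: eqP => [->|]. Qed.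

Lemma vle_upd x j v y :
  v <= y j -> (forall k, k != j -> x k <= y k) -> vle (upd x j v) y.
Proof.
move=> vy xy; apply/vleP => k.
by case: (eqVneq k j) => [-> | kj]; rewrite ?upd_same ?upd_other ?xy.
Qed.

Lemma vlt_upd x j v y :
  v < y j -> (forall k, k != j -> x k < y k) -> vlt (upd x j v) y.
Proof.
move=> vy xy; apply/vltP => k.
by case: (eqVneq k j) => [-> | kj]; rewrite ?upd_same ?upd_other ?xy.
Qed.

End CoordinateOrder.

Section Region.
Variables (R : realFieldType) (d rho : nat) (r : 'I_rho -> {ffun 'I_d -> R}).
Local Notation pt := {ffun 'I_d -> R}.
Implicit Types (T : {set 'I_rho}) (x y z w : pt) (i p : 'I_rho) (j k : 'I_d).

(* The record-setting region of the subfamily [(r i)_(i in T)]; the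
   induction of the lower bound adds the points of [r] one at a time. *)
Definition region T x : bool :=
  [forall j, (0 <= x j) && (x j < 1)] && [forall i in T, ~~ vlt x (r i)].

Definition is_gen T x : Prop := region T x /\ forall y, region T y -> vle y x -> y = x.

Lemma regionP T x :
  reflect ((forall j, 0 <= x j < 1) /\ (forall i, i \in T -> ~~ vlt x (r i)))
          (region T x).
Proof.
apply: (iffP andP) => [[/forallP ? /forall_inP ?] | [x01 xT]]; first by [].
by split; [exact/forallP | exact/forall_inP].
Qed.

Lemma region_ge0 T x j : region T x -> 0 <= x j.
Proof. by case/regionP => /(_ j) /andP[]. Qed.

Lemma region_lt1 T x j : region T x -> x j < 1.
Proof. by case/regionP => /(_ j) /andP[]. Qed.

Lemma region_avoid T x i : region T x -> i \in T -> ~~ vlt x (r i).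
Proof. by case/regionP => _; apply. Qed.

Lemma region_setT x : in_region r x = region setT x.
Proof. by congr (_ && _); apply: eq_forallb => i; rewrite in_setT. Qed.

Lemma is_gen_setT x : is_generator r x <-> is_gen setT x.
Proof.
rewrite /is_generator /is_gen region_setT.
by split=> -[xR xmin]; split=> // y; have := xmin y; rewrite region_setT.
Qed.

Lemma region_sub T1 T2 x : T1 \subset T2 -> region T2 x -> region T1 x.
Proof.
move=> sT /regionP[x01 xT]; apply/regionP; split=> // i iT1.
by apply: xT; exact: (subsetP sT).
Qed.

Definition below T (P : pred R) j : R := \big[Num.max/0]_(i in T | P (r i j)) r i j.

Lemma below_ge0 T P j : 0 <= below T P j.
Proof. exact: bigmax_ge_id. Qed.

Lemma le_below T (P : pred R) i j : i \in T -> P (r i j) -> r i j <= below T P j.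
Proof. by move=> iT Pi; rewrite /below (bigmaxD1 i) ?iT // le_max lexx. Qed.

Lemma below_le T (P : pred R) j c :
  0 <= c -> (forall i, i \in T -> P (r i j) -> r i j <= c) -> below T P j <= c.
Proof. by move=> c_ge0 le_c; apply: bigmax_le => // i /andP[]; exact: le_c. Qed.

Lemma below_cases T (P : pred R) j :
  below T P j = 0 \/ exists2 i, i \in T & P (r i j) /\ below T P j = r i j.
Proof.
rewrite /below; elim/big_ind: _ => [| a b Ha Hb | i /andP[iT Pi]]; first by left.
- by rewrite maxEle; case: ifP.
- by right; exists i.
Qed.

Definition on_grid T x : Prop := forall j, x j = 0 \/ exists2 i, i \in T & x j = r i j.

Definition floor T x : pt := [ffun j => below T (fun c => c <= x j) j].

Lemma floor_on_grid T x : on_grid T (floor T x).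
Proof.
move=> j; rewrite ffunE.
by case: (below_cases T (fun c => c <= x j) j) => [-> | [i iT [_ ->]]]; [left | right; exists i].
Qed.

Lemma floor_le T x : region T x -> vle (floor T x) x.
Proof.
move=> xR; apply/vleP => j; rewrite ffunE.
by apply: below_le => [|i _ //]; exact: region_ge0 xR.
Qed.

(* Rounding down keeps a point in the region: a point of [T] dominating
   the rounded point also dominates the original one. *)
Lemma floor_region T x : region T x -> region T (floor T x).
Proof.
move=> xR; apply/regionP; split=> [j | i iT].
  rewrite ffunE below_ge0 /=; apply: le_lt_trans (region_lt1 j xR).
  by have /vleP := floor_le xR; move=> /(_ j); rewrite ffunE.
apply: contra (region_avoid xR iT) => /vltP fl_lt; apply/vltP => j.
rewrite ltNge; apply/negP => rx.
by have := fl_lt j; rewrite ffunE ltNge (le_below iT rx).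
Qed.

Lemma gen_floor T x : is_gen T x -> floor T x = x.
Proof. by case=> xR xmin; apply: xmin; [exact: floor_region | exact: floor_le]. Qed.

Lemma gen_on_grid T x : is_gen T x -> on_grid T x.
Proof. by move=> /gen_floor <-; exact: floor_on_grid. Qed.

(* Grid points are indexed by a finite type: [None] stands for the
   coordinate [0], [Some i] for the coordinate of [r i]. *)
Definition grid_pt (f : {ffun 'I_d -> option 'I_rho}) : pt :=
  [ffun j => if f j is Some i then r i j else 0].

Definition grid_index T x : {ffun 'I_d -> option 'I_rho} :=
  [ffun j => [pick i in T | r i j == x j]].

Lemma grid_indexK T x : on_grid T x -> grid_pt (grid_index T x) = x.
Proof.
move=> xg; apply/ffunP => j; rewrite !ffunE.
case: pickP => [i /andP[_ /eqP //] | none].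
case: (xg j) => [-> // | [i iT xi]].
by have := none i; rewrite iT xi eqxx.
Qed.

Lemma gen_of_grid_min T x :
  region T x ->
  (forall f, region T (grid_pt f) -> vle (grid_pt f) x -> grid_pt f = x) ->
  is_gen T x.
Proof.
move=> xR grid_min; split=> // w wR wx.
have fl_grid := grid_indexK (floor_on_grid T w).
have fl_x : floor T w = x.
  rewrite -fl_grid; apply: grid_min; rewrite fl_grid; first exact: floor_region.
  exact: vle_trans (floor_le wR) wx.
by apply: vle_anti wx _; rewrite -fl_x floor_le.
Qed.

(* Every point of the region lies above a generator: take a grid point of
   the region below it with minimal coordinate sum. *)
Lemma exists_gen_below T y : region T y -> exists2 z, is_gen T z & vle z y.
Proof.
move=> yR.
pose P f := region T (grid_pt f) && vle (grid_pt f) y.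
have P0 : P (grid_index T (floor T y)).
  rewrite /P /= grid_indexK; last exact: floor_on_grid.
  by apply/andP; split; [exact: floor_region | exact: floor_le].
case: (arg_minP (fun f => \sum_j grid_pt f j) P0) => fm /andP[fmR fmy] fm_min.
exists (grid_pt fm) => //; apply: gen_of_grid_min => // f fR f_fm.
have Pf : P f by rewrite /P /= fR (vle_trans f_fm fmy).
exact: vle_sum_eq f_fm (fm_min f Pf).
Qed.

Definition genb T x : bool :=
  region T x &&
  [forall f, region T (grid_pt f) ==> vle (grid_pt f) x ==> (grid_pt f == x)].

Lemma genbP T x : reflect (is_gen T x) (genb T x).
Proof.
apply: (iffP andP) => [[xR /forallP grid_min] | [xR xmin]].
  apply: gen_of_grid_min => // f fR fx.
  by have /implyP/(_ fR)/implyP/(_ fx)/eqP := grid_min f.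
split=> //; apply/forallP => f; apply/implyP => fR; apply/implyP => fx.
by rewrite (xmin _ fR fx).
Qed.

Definition gens T : seq pt := undup [seq x <- codom grid_pt | genb T x].

Lemma gens_uniq T : uniq (gens T).
Proof. exact: undup_uniq. Qed.

Lemma mem_gens T x : x \in gens T <-> is_gen T x.
Proof.
rewrite mem_undup mem_filter; split=> [/andP[/genbP] // | xgen].
apply/andP; split; first exact/genbP.
by rewrite -(grid_indexK (gen_on_grid xgen)) codom_f.
Qed.

End Region.

Section LowerBound.
Variables (R : realFieldType) (d rho : nat) (r : 'I_rho -> {ffun 'I_d -> R}).
Hypotheses (d_gt0 : (0 < d)%N) (adm : admissible r).
Local Notation pt := {ffun 'I_d -> R}.
Implicit Types (T : {set 'I_rho}) (x y z w : pt) (i p : 'I_rho) (j k : 'I_d).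

Let c0 : 'I_d := Ordinal d_gt0.

Lemma r_gt0 i j : 0 < r i j.
Proof. by case: adm => /(_ i j) []. Qed.

Lemma r_lt1 i j : r i j < 1.
Proof. by case: adm => /(_ i j) []. Qed.

Lemma r_inj i i' j j' : r i j = r i' j' -> i = i' /\ j = j'.
Proof. by case: adm => _ [_ /(_ (i, j) (i', j'))] r_inj /r_inj [-> ->]. Qed.

Lemma r_incomp i i' : i != i' -> ~~ vle (r i) (r i').
Proof. by case: adm => _ [+ _]; apply. Qed.

(* Generators of the region of [T] never share a coordinate with a point
   outside [T]: they lie on the grid of [T], all of whose values differ. *)
Lemma gen_avoid_coord T p x j : p \notin T -> is_gen r T x -> x j != r p j.
Proof.
move=> pT /gen_on_grid /(_ j) [-> | [i iT ->]]; first by rewrite lt_eqF ?r_gt0.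
by apply/eqP => /r_inj[ip _]; rewrite -ip iT in pT.
Qed.

Section AddPoint.
Variables (T : {set 'I_rho}) (p : 'I_rho).
Hypotheses (pT : p \in T) (p_min : forall i, i \in T -> r p c0 <= r i c0).
Let T' := T :\ p.

Lemma lt_first_coord i : i \in T' -> r p c0 < r i c0.
Proof.
rewrite !inE => /andP[ip iT]; rewrite lt_neqAle p_min // andbT.
by apply: contra ip => /eqP /r_inj[-> _].
Qed.

Lemma region_T' x : region r T x -> region r T' x.
Proof. by apply: region_sub; exact: subsetDl. Qed.

(* In the region of [T'], the first coordinate of a point that is at most
   [r p c0] may be changed to any value of [[0, 1)]: all points of [T']
   have a larger first coordinate. *)
Lemma region_T'_set_first y v :
  region r T' y -> y c0 <= r p c0 -> 0 <= v < 1 -> region r T' (upd y c0 v).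
Proof.
move=> yR yc0 v01; apply/regionP; split=> [k | i iT'].
  case: (eqVneq k c0) => [-> | kc]; first by rewrite upd_same.
  by rewrite upd_other // (region_ge0 k yR) (region_lt1 k yR).
apply: contra (region_avoid yR iT') => /vltP up_lt; apply/vltP => k.
case: (eqVneq k c0) => [-> | kc]; last by have := up_lt k; rewrite upd_other.
exact: le_lt_trans yc0 (lt_first_coord iT').
Qed.

Lemma gen_kept x : is_gen r T' x -> ~~ vlt x (r p) -> is_gen r T x.
Proof.
move=> [xR xmin] xp; split=> [|w /region_T'/xmin //].
apply/regionP; split=> [k | i iT]; first by rewrite (region_ge0 k xR) (region_lt1 k xR).
case: (eqVneq i p) => [-> // | ip].
by apply: region_avoid xR _; rewrite !inE ip.
Qed.

(* A generator of [T'] dominated by [r p] has first coordinate [0]: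
   otherwise lowering it would stay in the region. *)
Lemma gen_dominated_first x : is_gen r T' x -> vlt x (r p) -> x c0 = 0.
Proof.
move=> [xR xmin] /vltP xp.
have x_low : upd x c0 0 = x.
  apply: xmin; first apply: region_T'_set_first => //; first exact/ltW/xp.
    by rewrite lexx ltr01.
  by apply: vle_upd => [|k _]; rewrite ?(region_ge0 c0 xR).
by rewrite -x_low upd_same.
Qed.

Lemma gen_raised x : is_gen r T' x -> vlt x (r p) -> is_gen r T (upd x c0 (r p c0)).
Proof.
move=> [xR xmin] /vltP xp; set z := upd x c0 (r p c0).
have xz : vle x z.
  apply/vleP => k; case: (eqVneq k c0) => [-> | kc]; last by rewrite upd_other.
  by rewrite upd_same ltW.
have zR : region r T z.
  apply/regionP; split=> [k | i iT].
    case: (eqVneq k c0) => [-> | kc]; first by rewrite upd_same ltW ?r_gt0 ?r_lt1.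
    by rewrite upd_other // (region_ge0 k xR) (region_lt1 k xR).
  case: (eqVneq i p) => [-> | ip].
    by apply/negP => /vltP /(_ c0); rewrite upd_same ltxx.
  have iT' : i \in T' by rewrite !inE ip.
  by apply: contra (region_avoid xR iT'); exact: vle_vlt_trans xz.
split=> // w wR /vleP wz.
have w_first : w c0 = r p c0.
  apply/le_anti; rewrite -{1}(upd_same x c0 (r p c0)) wz /= leNgt.
  apply: contra (region_avoid wR pT) => w_lt; rewrite -(updK w c0).
  apply: vlt_upd => // k kc; apply: le_lt_trans (wz k) _.
  by rewrite upd_other ?xp.
have w_low : upd w c0 (x c0) = x.
  apply: xmin; first apply: region_T'_set_first.
  - exact: region_T'.
  - by rewrite w_first.
  - by rewrite (region_ge0 c0 xR) (region_lt1 c0 xR).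
  by apply: vle_upd => // k kc; have := wz k; rewrite upd_other.
by rewrite -(updK w c0) w_first -(upd_upd w c0 (x c0)) w_low.
Qed.

Definition lift x : pt := if vlt x (r p) then upd x c0 (r p c0) else x.

Lemma lift_gen x : is_gen r T' x -> is_gen r T (lift x).
Proof.
by move=> xgen; rewrite /lift; case: ifPn => xp; [exact: gen_raised | exact: gen_kept].
Qed.

Lemma p_notin_T' : p \notin T'.
Proof. by rewrite !inE eqxx. Qed.

(* Raised generators are distinguished from kept ones by their first
   coordinate [r p c0], and from each other because they all had first
   coordinate [0] before raising. *)
Lemma lift_inj : {in gens r T' &, injective lift}.
Proof.
move=> x y /mem_gens xgen /mem_gens ygen; rewrite /lift.
case: ifPn => xp; case: ifPn => yp => e.
- rewrite -(updK x c0) -(updK y c0) (gen_dominated_first xgen xp).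
  by rewrite (gen_dominated_first ygen yp) -(upd_upd x c0 (r p c0)) e upd_upd.
- by have := gen_avoid_coord c0 p_notin_T' ygen; rewrite -e upd_same eqxx.
- by have := gen_avoid_coord c0 p_notin_T' xgen; rewrite e upd_same eqxx.
- exact: e.
Qed.

Definition peak j z : bool :=
  (z j == r p j) && [forall k, (k != j) ==> (z k < r p k)].

Lemma peak_inj j j' z : peak j z -> peak j' z -> j = j'.
Proof.
move=> /andP[_ /forallP zj] /andP[/eqP zj' _]; apply/eqP/negPn/negP => jj'.
by have /implyP/(_ _) := zj j'; rewrite eq_sym jj' zj' ltxx => /(_ isT).
Qed.

Lemma lift_not_peak j x : j != c0 -> x \in gens r T' -> ~~ peak j (lift x).
Proof.
move=> jc /mem_gens xgen; apply/negP => /andP[/eqP lift_j _]; move: lift_j.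
rewrite /lift; case: ifPn => [/vltP xp | _] xj.
  by have := xp j; rewrite -xj upd_other // ltxx.
by have := gen_avoid_coord j p_notin_T' xgen; rewrite xj eqxx.
Qed.

(* For every coordinate [j] other than the first, some generator of [T]
   peaks at [j]: take a generator below the point meeting [r p] at [j] and
   lying just below it elsewhere, at the largest smaller grid value. *)
Lemma exists_peak_gen j : j != c0 -> exists2 z, is_gen r T z & peak j z.
Proof.
move=> jc.
pose y := upd [ffun k => below r T (fun c => c < r p k) k] j (r p j).
have y_j : y j = r p j by rewrite upd_same.
have y_lt k : k != j -> y k < r p k.
  move=> kj; rewrite upd_other // ffunE.
  by case: (below_cases r T (fun c => c < r p k) k) => [-> | [i _ [lt ->]]]; rewrite ?r_gt0.
have yR : region r T y.
  apply/regionP; split=> [k | i iT].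
    case: (eqVneq k j) => [-> | kj]; first by rewrite y_j ltW ?r_gt0 ?r_lt1.
    by rewrite (lt_trans (y_lt k kj)) ?r_lt1 // upd_other // ffunE below_ge0.
  apply/negP => /vltP yi.
  have ip : p != i by apply: contraTneq (yi j) => <-; rewrite y_j ltxx.
  apply: (negP (r_incomp ip)); apply/vleP => k.
  case: (eqVneq k j) => [-> | kj]; first by rewrite -y_j ltW.
  rewrite leNgt; apply/negP => rik.
  have := yi k; rewrite upd_other // ffunE ltNge.
  by rewrite (le_below iT (P := fun c => c < r p k)).
have [z zgen /vleP zy] := exists_gen_below yR.
have z_lt k : k != j -> z k < r p k by move=> kj; exact: le_lt_trans (zy k) (y_lt k kj).
exists z => //; rewrite /peak; apply/andP; split.
  rewrite eq_le -{1}y_j zy leNgt /=.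
  apply: contra (region_avoid zgen.1 pT) => zj; apply/vltP => k.
  by case: (eqVneq k j) => [-> // | kj]; exact: z_lt.
by apply/forallP => k; apply/implyP; exact: z_lt.
Qed.

(* The region of [T] has at least [d - 1] more generators than that of
   [T']: the lifted generators, plus one peaking generator per coordinate
   other than the first. *)
Lemma size_gens_add : (size (gens r T') + (d - 1) <= size (gens r T))%N.
Proof.
pose peak_gen j := nth 0 (gens r T) (find (peak j) (gens r T)).
have has_peak j : j != c0 -> has (peak j) (gens r T).
  by move=> jc; have [z /mem_gens zgen zj] := exists_peak_gen jc; apply/hasP; exists z.
pose L := map lift (gens r T') ++ map peak_gen (enum (predC1 c0)).
have L_gens : {subset L <= gens r T}.
  move=> x; rewrite mem_cat => /orP[/mapP[y /mem_gens ygen ->] | /mapP[j]].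
    exact/mem_gens/lift_gen.
  by rewrite mem_enum => jc ->; rewrite mem_nth // -has_find has_peak.
have L_uniq : uniq L.
  rewrite cat_uniq (map_inj_in_uniq lift_inj) gens_uniq /=; apply/andP; split.
    apply/hasPn => x /mapP[j]; rewrite mem_enum => jc ->.
    apply/mapP => -[y yT' e]; move: (lift_not_peak jc yT'); rewrite -e.
    by rewrite nth_find ?has_peak.
  rewrite map_inj_in_uniq ?enum_uniq // => j j'; rewrite !mem_enum => jc jc' e.
  by apply: (@peak_inj j j' (peak_gen j)); [|rewrite e]; rewrite nth_find ?has_peak.
have := uniq_leq_size L_uniq L_gens.
by rewrite size_cat !size_map -cardE cardC1 card_ord subn1.
Qed.

End AddPoint.

(* The lower bound, for every subfamily: induction on its size, adding at
   each step the point with the smallest first coordinate. *)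
Lemma size_gens_lower T : ((d - 1) * #|T| + 1 <= size (gens r T))%N.
Proof.
move cardT: #|T| => n; elim: n T cardT => [|n IH] T cardT.
  have [z /mem_gens zgen _] : exists2 z, is_gen r T z & vle z [ffun => 0].
    apply: exists_gen_below; apply/regionP; split=> [k | i].
      by rewrite ffunE lexx ltr01.
    by move/eqP: cardT; rewrite cards_eq0 => /eqP ->; rewrite inE.
  by rewrite muln0; case: (gens r T) zgen.
have [i0 i0T] : exists i0, i0 \in T by apply/set0Pn; rewrite -card_gt0 cardT.
case: (@arg_minP _ _ _ i0 (fun i => i \in T) (fun i => r i c0) i0T) => p pT p_min.
have cardT' : #|T :\ p| = n by move: cardT; rewrite (cardsD1 p) pT => -[].
have := IH _ cardT'; have := size_gens_add pT p_min; rewrite mulnS; lia.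
Qed.

End LowerBound.

(* An optimal family: the points [stair i] decrease along the first
   coordinate and increase along all the others, all coordinates being
   distinct multiples of [1 / M]. *)
Section Construction.
Variables (R : realFieldType) (d rho : nat).
Hypothesis d_gt0 : (0 < d)%N.
Local Notation pt := {ffun 'I_d -> R}.
Implicit Types (w x : pt) (i l : 'I_rho) (j k : 'I_d).

Let c0 : 'I_d := Ordinal d_gt0.
Let M := (rho + rho * d).+1.

Definition frac (n : nat) : R := n%:R / M%:R.

Lemma frac_lt m n : (frac m < frac n) = (m < n)%N.
Proof. by rewrite /frac ltr_pM2r ?invr_gt0 ?ltr0n // ltr_nat. Qed.

Lemma frac_le m n : (frac m <= frac n) = (m <= n)%N.
Proof. by rewrite /frac ler_pM2r ?invr_gt0 ?ltr0n // ler_nat. Qed.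

Lemma frac_inj : injective frac.
Proof. by move=> m n e; apply/eqP; rewrite eqn_leq -!frac_le e lexx. Qed.

Lemma frac0 : frac 0 = 0.
Proof. by rewrite /frac mul0r. Qed.

Lemma fracM : frac M = 1.
Proof. by rewrite /frac divff // pnatr_eq0. Qed.

Definition level i j : nat := if j == c0 then (rho - i)%N else (rho + i * d + j)%N.

Lemma level_bounds i j : (0 < level i j < M)%N.
Proof.
rewrite /level /M; case: ifP => _; have := ltn_ord i; have := ltn_ord j; first lia.
move=> jd i_rho; have : (i.+1 * d <= rho * d)%N by rewrite leq_mul2r i_rho orbT.
rewrite mulSn; lia.
Qed.

Lemma level_inj i i' j j' : level i j = level i' j' -> i = i' /\ j = j'.
Proof.
have := ltn_ord i; have := ltn_ord i'; have := ltn_ord j; have := ltn_ord j'.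
have c0_val k : (k == c0) = (nat_of_ord k == 0%N) by [].
rewrite /level !c0_val; case: eqP => j0; case: eqP => j'0 => *.
- by split; apply: val_inj; rewrite /= ?j0 ?j'0 //; lia.
- lia.
- lia.
have e : (i * d + j = i' * d + j')%N by lia.
have ii' : nat_of_ord i = i'.
  by have := congr1 (divn^~ d) e; rewrite !divnMDl // !divn_small // !addn0.
by split; apply: val_inj => //=; move: e; rewrite ii'; lia.
Qed.

Definition stair i : pt := [ffun j => frac (level i j)].

(* The first coordinate of [stair t], extended by [height rho = 0]. *)
Definition height (t : nat) : R := frac (rho - t).

Lemma stair_first i : stair i c0 = height i.
Proof. by rewrite ffunE /level eqxx. Qed.

Lemma stair_gt0 i j : 0 < stair i j.
Proof. by rewrite ffunE -frac0 frac_lt; case/andP: (level_bounds i j). Qed.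

Lemma stair_lt1 i j : stair i j < 1.
Proof. by rewrite ffunE -fracM frac_lt; case/andP: (level_bounds i j). Qed.

Lemma stair_lt i l j : j != c0 -> (stair i j < stair l j) = (i < l)%N.
Proof. by move=> jc; rewrite !ffunE frac_lt /level (negbTE jc) ltn_add2r ltn_add2l ltn_pmul2r. Qed.

Lemma height_le s t : (s <= t)%N -> height t <= height s.
Proof. by move=> st; rewrite frac_le; lia. Qed.

Lemma height_ge0 t : 0 <= height t.
Proof. by rewrite -frac0 frac_le. Qed.

Lemma height_lt1 t : height t < 1.
Proof. by rewrite -fracM frac_lt /M; lia. Qed.

(* The family is admissible, except in dimension 1 with two or more points,
   where no admissible family exists at all. *)
Lemma stair_admissible : (1 < d)%N \/ (rho <= 1)%N -> admissible stair.
Proof.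
move=> d_or_rho; split; first by move=> i j; rewrite stair_gt0 stair_lt1.
split; last by move=> [i j] [i' j'] /=; rewrite !ffunE => /frac_inj/level_inj[-> ->].
move=> i l il; apply/negP => /vleP le_il.
case: (ltngtP i l) => [lt | gt | /val_inj e]; last by rewrite e eqxx in il.
  by have := le_il c0; rewrite !stair_first /height frac_le; have := ltn_ord l; lia.
case: d_or_rho => [d_gt1 | rho_le1]; last by have := ltn_ord i; lia.
by have := le_il (Ordinal d_gt1); rewrite leNgt stair_lt // gt.
Qed.

(* The generators: [top], and for each point [i] and coordinate [j] other
   than the first, the corner [corner i j] between [stair i] and the
   next point [stair i.+1]. *)
Definition base (t : nat) : pt := upd [ffun => 0] c0 (height t).
Definition top : pt := base 0.
Definition corner i j : pt := upd (base i.+1) j (stair i j).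

Lemma height_succ_lt i : height i.+1 < height i.
Proof. by rewrite frac_lt; have := ltn_ord i; lia. Qed.

Lemma height_rho t : (rho <= t)%N -> height t = 0.
Proof. by move=> le_rho; rewrite /height (eqP le_rho) frac0. Qed.

Lemma base_first t : base t c0 = height t.
Proof. exact: upd_same. Qed.

Lemma base_other t k : k != c0 -> base t k = 0.
Proof. by move=> kc; rewrite upd_other // ffunE. Qed.

Lemma corner_first i j : j != c0 -> corner i j c0 = height i.+1.
Proof. by move=> jc; rewrite upd_other 1?eq_sym // base_first. Qed.

Lemma corner_other i j k : k != j -> k != c0 -> corner i j k = 0.
Proof. by move=> kj kc; rewrite upd_other // base_other. Qed.

(* [top] and [corner i j] vanish outside the coordinates [c0] and [j]
   (with [j = c0] for [top]); a point below such a point [x] is dominated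
   by [stair l] as soon as it is in these two coordinates. *)
Definition supported_on j x : Prop := forall k, k != j -> k != c0 -> x k = 0.

Lemma vlt_stair_supported j x w l : supported_on j x -> vle w x ->
  w c0 < stair l c0 -> w j < stair l j -> vlt w (stair l).
Proof.
move=> x0 /vleP wx wc wj; apply/vltP => k.
case: (eqVneq k c0) => [-> // | kc]; case: (eqVneq k j) => [-> // | kj].
by apply: le_lt_trans (wx k) _; rewrite x0 ?stair_gt0.
Qed.

Lemma vle_supported j x w : supported_on j x -> region stair setT w ->
  x c0 <= w c0 -> x j <= w j -> vle x w.
Proof.
move=> x0 wR xc xj; apply/vleP => k.
case: (eqVneq k c0) => [-> // | kc]; case: (eqVneq k j) => [-> // | kj].
by rewrite x0 ?(region_ge0 k wR).
Qed.

Lemma top_gen : is_gen stair setT top.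
Proof.
have top0 : supported_on c0 top by move=> k _ kc; exact: base_other.
split=> [|w wR wtop].
  apply/regionP; split=> [k | l _].
    case: (eqVneq k c0) => [-> | kc]; last by rewrite base_other // lexx ltr01.
    by rewrite base_first height_ge0 height_lt1.
  by apply/negP => /vltP /(_ c0); rewrite base_first stair_first ltNge height_le.
have first_le : height 0 <= w c0.
  rewrite leNgt; apply/negP => w_lt.
  have rho_gt0 : (0 < rho)%N.
    rewrite lt0n; apply: contraTneq w_lt => rho0.
    by rewrite height_rho ?rho0 // -leNgt (region_ge0 c0 wR).
  apply: (negP (region_avoid wR (in_setT (Ordinal rho_gt0)))).
  by apply: vlt_stair_supported top0 wtop _ _; rewrite stair_first.
by apply: vle_anti wtop (vle_supported top0 wR _ _); rewrite base_first.
Qed.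

Lemma corner_gen i j : j != c0 -> is_gen stair setT (corner i j).
Proof.
move=> jc; have corner0 : supported_on j (corner i j) by move=> k; exact: corner_other.
have corner_j : corner i j j = stair i j by exact: upd_same.
split=> [|w wR wc].
  apply/regionP; split=> [k | l _].
    case: (eqVneq k j) => [-> | kj]; first by rewrite corner_j ltW ?stair_gt0 ?stair_lt1.
    case: (eqVneq k c0) => [-> | kc]; last by rewrite corner_other // lexx ltr01.
    by rewrite corner_first // height_ge0 height_lt1.
  apply/negP => /vltP lt_l; case: (leqP l i) => li.
    by have := lt_l j; rewrite corner_j stair_lt // ltnNge li.
  by have := lt_l c0; rewrite corner_first // stair_first ltNge height_le.
have /vleP w_le := wc.
have first_le : height i.+1 <= w c0.
  rewrite leNgt; apply/negP => w_lt.
  have i1_rho : (i.+1 < rho)%N.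
    rewrite ltnNge; apply: contraTN w_lt => rho_le.
    by rewrite height_rho // -leNgt (region_ge0 c0 wR).
  apply: (negP (region_avoid wR (in_setT (Ordinal i1_rho)))).
  apply: vlt_stair_supported corner0 wc _ _; first by rewrite stair_first.
  by apply: le_lt_trans (w_le j) _; rewrite corner_j stair_lt.
have j_le : stair i j <= w j.
  rewrite leNgt; apply/negP => w_lt.
  apply: (negP (region_avoid wR (in_setT i))).
  apply: vlt_stair_supported corner0 wc _ w_lt; rewrite stair_first.
  by apply: le_lt_trans (w_le c0) _; rewrite corner_first ?height_succ_lt.
by apply: vle_anti wc (vle_supported corner0 wR _ _); rewrite ?corner_first ?corner_j.
Qed.

Lemma height_bracket y : 0 <= y -> y < height 0 ->
  exists t : 'I_rho, height t.+1 <= y < height t.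
Proof.
move=> y0; suff bracket n : (n <= rho)%N -> y < height (rho - n) ->
    exists t : 'I_rho, height t.+1 <= y < height t.
  by move=> y_lt; apply: (bracket rho); rewrite ?subnn.
elim: n => [|n IH] n_le y_lt; first by move: y_lt; rewrite subn0 height_rho // ltNge y0.
case: (ltP y (height (rho - n))) => [lt | ge]; first by apply: IH => //; lia.
have t_lt : (rho - n.+1 < rho)%N by lia.
exists (Ordinal t_lt); rewrite y_lt andbT /=.
by rewrite (_ : (rho - n.+1).+1 = rho - n)%N //; lia.
Qed.

(* Every generator is [top] or a corner: above [top] nothing else is
   minimal, and a point between two consecutive heights lies above the
   corner at a coordinate where it escapes [stair t]. *)
Lemma stair_gen_cases x : is_gen stair setT x ->
  x = top \/ exists i j, j != c0 /\ x = corner i j.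
Proof.
move=> [xR xmin]; case: (leP (height 0) (x c0)) => [top_le | x_lt].
  left; apply/esym/xmin; first by case: top_gen.
  apply: (vle_supported (j := c0)); rewrite ?base_first //.
  by move=> k _; exact: base_other.
have [t /andP[t_le t_lt]] := height_bracket (region_ge0 c0 xR) x_lt.
have := region_avoid xR (in_setT t); rewrite /vlt negb_forall => /existsP[k].
rewrite -leNgt => stair_le.
have kc : k != c0 by apply: contraTneq stair_le => ->; rewrite stair_first -ltNge.
right; exists t, k; split=> //; apply/esym/xmin; first by case: (corner_gen t kc).
apply: vle_supported xR _ _; first by move=> l; exact: corner_other.
  by rewrite corner_first.
by rewrite upd_same.
Qed.

Lemma corner_inj i i' j j' : j != c0 -> corner i j = corner i' j' -> (i, j) = (i', j').
Proof.
move=> jc e; have := congr1 (fun x => x j) e; rewrite /= upd_same.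
case: (eqVneq j j') => [<- | jj']; first by rewrite upd_same !ffunE => /frac_inj/level_inj[-> _].
by rewrite corner_other // => stair0; have := stair_gt0 i j; rewrite stair0 ltxx.
Qed.

Definition stair_gen_list : seq pt :=
  top :: [seq corner i j | i <- enum 'I_rho, j <- enum (predC1 c0)].

Lemma stair_gen_list_uniq : uniq stair_gen_list.
Proof.
apply/andP; split.
  apply/negP => /allpairsP[[i j] [_ /= jc e]]; rewrite mem_enum in jc.
  have := congr1 (fun x => x j) e; rewrite /= upd_same base_other //.
  by move=> stair0; have := stair_gt0 i j; rewrite -stair0 ltxx.
apply: (allpairs_uniq (enum_uniq 'I_rho) (enum_uniq (predC1 c0))).
move=> _ _ /allpairsP[[i j] [_ jc ->]] /allpairsP[[i' j'] [_ _ ->]] /=.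
by rewrite mem_enum in jc; exact: corner_inj.
Qed.

Lemma stair_num_generators : num_generators stair ((d - 1) * rho + 1)%N.
Proof.
exists stair_gen_list; split; first exact: stair_gen_list_uniq.
  move=> x; rewrite is_gen_setT; split.
    rewrite inE => /orP[/eqP -> | /allpairsP[[i j] [_ /= jc ->]]]; first exact: top_gen.
    by rewrite mem_enum in jc; exact: corner_gen.
  case/stair_gen_cases => [-> | [i [j [jc ->]]]]; first exact: mem_head.
  by rewrite inE; apply/orP; right; apply/allpairsP; exists (i, j); rewrite !mem_enum.
by rewrite /= size_allpairs -!cardE cardC1 !card_ord subn1 mulnC addn1.
Qed.

End Construction.

(* In dimension 1 any two points are comparable, so an admissible family
   has at most one point. *)
Lemma admissible_dim1 (R : realFieldType) (d rho : nat) (r : 'I_rho -> {ffun 'I_d -> R}) :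
  (0 < d)%N -> admissible r -> (1 < d)%N \/ (rho <= 1)%N.
Proof.
move=> d_gt0 [_ [incomp _]]; case: (ltnP 1 d) => [d_gt1 | d_le1]; [by left | right].
rewrite leqNgt; apply/negP => rho_gt1.
have d1 (j : 'I_d) : j = Ordinal d_gt0 by apply: val_inj => /=; have := ltn_ord j; lia.
have r_le i i' : r i (Ordinal d_gt0) <= r i' (Ordinal d_gt0) -> vle (r i) (r i').
  by move=> le; apply/vleP => j; rewrite (d1 j).
pose i0 : 'I_rho := Ordinal (ltnW rho_gt1); pose i1 : 'I_rho := Ordinal rho_gt1.
case/orP: (le_total (r i0 (Ordinal d_gt0)) (r i1 (Ordinal d_gt0))) => /r_le.
  exact/negP/incomp.
exact/negP/incomp.
Qed.

Theorem theoremT (R : realFieldType) (d rho : nat) (hd : (0 < d)%N) :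
  (forall r : 'I_rho -> {ffun 'I_d -> R}, admissible r ->
     exists g : nat, num_generators r g /\ ((d - 1) * rho + 1 <= g)%N) /\
  ((exists r : 'I_rho -> {ffun 'I_d -> R}, admissible r) ->
     exists r : 'I_rho -> {ffun 'I_d -> R},
       admissible r /\ num_generators r ((d - 1) * rho + 1)%N).
Proof.
split=> [r adm | [r adm]].
  exists (size (gens r setT)); split.
    exists (gens r setT); split=> // [|x]; first exact: gens_uniq.
    by rewrite is_gen_setT; exact: mem_gens.
  by have := size_gens_lower hd adm setT; rewrite cardsT card_ord.
exists (stair R hd); split; last exact: stair_num_generators.
exact/stair_admissible/(admissible_dim1 hd adm).
Qed.
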